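(* Let $f:[0,\infty)\to[0,\infty)$ be continuously differentiable with $f>0$ on $[t_0,\infty)$ for some $t_0\ge0$ and $f\in C^2([t_0,\infty))$, let $g=\log f$ on $[t_0,\infty)$, and assume condition (H1) of the context with $q=1$. Let $(t_n),(x_n)\subset(0,\infty)$ and $x_0\in[0,\infty)$ satisfy $t_n\to\infty$ and $x_n\to x_0$. Then $$\lim_{n\to\infty}\frac{g\big(t_n-x_n\frac{g(t_n)}{g'(t_n)}\big)}{g(t_n)}=e^{-x_0}=\lim_{n\to\infty}\frac{g'\big(t_n-x_n\frac{g(t_n)}{g'(t_n)}\big)}{g'(t_n)}.$$
   Context: Condition (H1): (i) $g'(t)>0$ and $g''(t)>0$ for all $t\ge t_0$, and there is a pair $(q,p)$ with either $q=1$ and $p\in(0,\infty]$, or $q\in(1,\infty)$ and $p\in(0,\infty)$, such that $\lim_{t\to\infty}\frac{g'(t)^2}{g(t)g''(t)}=q$ and $\lim_{t\to\infty}\frac{tg'(t)}{g(t)}=p$; (ii) if $q=1$, then $tg'(t)/g(t)$ is nondecreasing on $[t_0,\infty)$ and there exist $k\in\mathbb{N}$ and $\hat g\in C^2([t_0,\infty))$ with $f=\exp_k\circ\hat g$ and $\hat g'/\hat g$ nonincreasing on $[t_0,\infty)$ ($\exp_1=\exp$, $\exp_k=\exp_{k-1}\circ\exp$). *)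

From Stdlib Require Import Reals.
From Coquelicot Require Import Coquelicot.
Open Scope R_scope.

Definition deriv_Ici (a : R) (f f' : R -> R) : Prop :=
  forall t, a <= t ->
    filterlim (fun h => (f (t + h) - f t) / h)
      (within (fun h => h <> 0 /\ a <= t + h) (locally 0))
      (locally (f' t)).

Definition cont_Ici (a : R) (f : R -> R) : Prop :=
  forall t, a <= t ->
    filterlim f (within (fun s => a <= s) (locally t)) (locally (f t)).

Fixpoint exp_iter (k : nat) (x : R) : R :=
  match k with
  | O => x
  | S k' => exp_iter k' (exp x)
  end.

From Stdlib Require Import Reals Lra.
From Coquelicot Require Import Coquelicot.
Open Scope R_scope.

(* Let G = ln f (the paper's g) and h = G/G' ([scale G g1]).  The q = 1 part
   of (H1)(i) says exactly that h' = 1 - G G''/G'^2 tends to 0, so h(t) = o(t),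
   the points s_n = t_n - x_n h(t_n) still tend to infinity, and by the mean
   value theorem h(c)/h(t_n) -> 1 uniformly for c in [s_n, t_n].  As
   (ln G)' = 1/h, a second application of the mean value theorem gives
   ln G(t_n) - ln G(s_n) = x_n h(t_n)/h(c_n) -> x_0, whence
   G(s_n)/G(t_n) -> e^(-x_0); the limit for G' = G/h follows. *)

Lemma deriv_Ici_is_derive (a : R) (F F' : R -> R) (u : R) :
  deriv_Ici a F F' -> a < u -> is_derive F u (F' u).
Proof.
  intros HF Hu. apply is_derive_Reals. intros eps Heps.
  destruct (HF u (Rlt_le _ _ Hu) (fun y => Rabs (y - F' u) < eps))
    as [d Hd]; [now exists (mkposreal eps Heps)|].
  assert (Hpos : 0 < Rmin d (u - a)) by (apply Rmin_pos; [apply cond_pos | lra]).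
  exists (mkposreal _ Hpos). intros k Hk0 Hk. simpl in Hk.
  pose proof (Rmin_l d (u - a)). pose proof (Rmin_r d (u - a)).
  apply Hd.
  - change (Rabs (k - 0) < d). rewrite Rminus_0_r. lra.
  - split; [exact Hk0|]. apply Rabs_def2 in Hk. lra.
Qed.

Lemma increment_bounds (F F' : R -> R) (a b m M : R) :
  a <= b -> (forall u, a <= u <= b -> is_derive F u (F' u)) ->
  (forall u, a <= u <= b -> m <= F' u <= M) ->
  m * (b - a) <= F b - F a <= M * (b - a).
Proof.
  intros Hab HF HF'.
  destruct (MVT_gen F a b F') as [c [Hc ->]];
    rewrite ?Rmin_left, ?Rmax_right in * by lra.
  - intros u Hu. apply HF. lra.
  - intros u Hu. apply continuity_pt_filterlim, (ex_derive_continuous F u).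
    exists (F' u). apply HF. lra.
  - destruct (HF' c Hc). split; apply Rmult_le_compat_r; lra.
Qed.

Lemma increment_small_eventually (F F' : R -> R) (a : R) :
  (forall u, a < u -> is_derive F u (F' u)) -> is_lim F' p_infty 0 ->
  forall eps, 0 < eps -> exists M, a < M /\
    forall u v, M <= u <= v -> Rabs (F v - F u) <= eps * (v - u).
Proof.
  intros HF HF' eps Heps.
  destruct (proj2 (is_lim_spec F' p_infty 0) HF' (mkposreal eps Heps)) as [M0 HM0].
  exists (Rmax M0 a + 1). pose proof (Rmax_l M0 a). pose proof (Rmax_r M0 a).
  split; [lra|]. intros u v Huv.
  apply Rabs_le. replace (- (eps * (v - u))) with (- eps * (v - u)) by ring.
  apply (increment_bounds F F'); [lra | intros w Hw; apply HF; lra |].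
  intros w Hw. assert (Hw' : Rabs (F' w - 0) < eps) by (apply HM0; lra).
  rewrite Rminus_0_r in Hw'. apply Rabs_def2 in Hw'. lra.
Qed.

Lemma sublinear_of_deriv_lim_0 (F F' : R -> R) (a : R) :
  (forall u, a < u -> is_derive F u (F' u)) -> is_lim F' p_infty 0 ->
  is_lim (fun u => F u / u) p_infty 0.
Proof.
  intros HF HF'. apply is_lim_spec. intros eps.
  destruct (increment_small_eventually F F' a HF HF' (eps / 2))
    as [M [_ HM]]; [pose proof (cond_pos eps); lra |].
  pose proof (Rmax_l M 0). pose proof (Rmax_r M 0). set (B := Rmax M 0) in *.
  exists (Rmax B (2 * Rabs (F B) / eps)). intros u Hu.
  pose proof (Rmax_l B (2 * Rabs (F B) / eps)).
  pose proof (Rmax_r B (2 * Rabs (F B) / eps)).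
  assert (HFB : 0 <= 2 * Rabs (F B) / eps)
    by (apply Rdiv_le_0_compat; [pose proof (Rabs_pos (F B)) | apply cond_pos]; lra).
  assert (Hinc := HM B u ltac:(lra)).
  assert (HFu : Rabs (F u) <= Rabs (F B) + eps / 2 * u).
  { pose proof (Rabs_triang_inv (F u) (F B)). pose proof (cond_pos eps). nra. }
  assert (HFB' : 2 * Rabs (F B) < eps * u).
  { apply (Rmult_lt_reg_r (/ eps)); [apply Rinv_0_lt_compat, cond_pos|].
    replace (eps * u * / eps) with u by (field; apply Rgt_not_eq, cond_pos).
    unfold Rdiv in *. lra. }
  rewrite Rminus_0_r, Rabs_div, (Rabs_pos_eq u) by lra.
  apply Rlt_div_l; lra.
Qed.

Lemma is_lim_seq_approx (u v : nat -> R) (l : R) :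
  is_lim_seq v l ->
  (forall eps, 0 < eps -> eventually (fun n => Rabs (u n - v n) <= eps)) ->
  is_lim_seq u l.
Proof.
  intros Hv Huv.
  assert (H0 : is_lim_seq (fun n => u n - v n) 0).
  { apply is_lim_seq_spec. intros eps.
    assert (Heps : 0 < eps / 2) by (pose proof (cond_pos eps); lra).
    refine (filter_imp _ _ _ (Huv _ Heps)). intros n Hn.
    rewrite Rminus_0_r. pose proof (cond_pos eps). lra. }
  apply (is_lim_seq_ext (fun n => (u n - v n) + v n)); [intros n; ring|].
  replace l with (0 + l) by ring. exact (is_lim_seq_plus' _ _ _ _ H0 Hv).
Qed.

Lemma is_derive_ln_comp (F : R -> R) (u d : R) :
  is_derive F u d -> 0 < F u -> is_derive (fun y => ln (F y)) u (d / F u).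
Proof.
  intros HF Hpos. rewrite Rdiv_def.
  exact (is_derive_comp ln F u _ _ (is_derive_ln _ Hpos) HF).
Qed.

Lemma Rdiv_pos_denom (a b : R) : 0 < a -> 0 < a / b -> 0 < b.
Proof.
  intros Ha Hab. destruct (Rtotal_order b 0) as [Hb | [Hb | Hb]]; [| subst b |]; auto.
  - pose proof (Rdiv_pos_neg a b Ha Hb). lra.
  - rewrite Rdiv_0_r in Hab. lra.
Qed.

Lemma Rabs_sub_le_of_div_bounds (x y e : R) :
  0 <= x -> 0 < e -> e <= 1 / 2 -> x / (1 + e) <= y <= x / (1 - e) ->
  Rabs (y - x) <= 2 * e * x.
Proof.
  intros Hx He He2 [Hlow Hup]. apply Rabs_le. split.
  - apply Rle_div_l in Hlow; [|lra].
    assert (0 <= x * e) by (apply Rmult_le_pos; lra).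
    assert (0 <= y * e) by nra. nra.
  - apply Rle_div_r in Hup; [|lra].
    assert (0 <= x * e * (1 - 2 * e)) by (apply Rmult_le_pos; [apply Rmult_le_pos|]; lra).
    nra.
Qed.

Definition scale (G g1 : R -> R) (u : R) : R := G u / g1 u.

Definition shift (G g1 : R -> R) (t x : nat -> R) (n : nat) : R :=
  t n - x n * G (t n) / g1 (t n).

Section Shift.

Variables (G g1 g2 : R -> R) (t0 : R).
Hypothesis HG : forall u, t0 < u -> is_derive G u (g1 u).
Hypothesis Hg1 : forall u, t0 < u -> is_derive g1 u (g2 u).
Hypothesis Hg1pos : forall u, t0 < u -> 0 < g1 u.
Hypothesis Hg2pos : forall u, t0 < u -> 0 < g2 u.
Hypothesis Hq : is_lim (fun u => g1 u ^ 2 / (G u * g2 u)) p_infty 1.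

Local Notation h := (scale G g1).

Lemma G_pos_eventually : exists M, t0 < M /\ forall u, M <= u -> 0 < G u.
Proof.
  destruct (proj2 (is_lim_spec _ p_infty 1) Hq (mkposreal 1 Rlt_0_1)) as [M0 HM0].
  exists (Rmax M0 t0 + 1). pose proof (Rmax_l M0 t0). pose proof (Rmax_r M0 t0).
  split; [lra|]. intros u Hu.
  assert (Hratio := HM0 u ltac:(lra)). simpl in Hratio. apply Rabs_def2 in Hratio.
  assert (Hg1u := Hg1pos u ltac:(lra)). assert (Hg2u := Hg2pos u ltac:(lra)).
  assert (HGg2 : 0 < G u * g2 u) by (apply (Rdiv_pos_denom (g1 u ^ 2)); nra).
  nra.
Qed.

Lemma scale_derive (u : R) :
  t0 < u -> is_derive h u (1 - G u * g2 u / g1 u ^ 2).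
Proof.
  intros Hu. assert (Hg1u := Hg1pos u Hu).
  replace (1 - G u * g2 u / g1 u ^ 2)
    with ((g1 u * g1 u - G u * g2 u) / g1 u ^ 2) by (field; lra).
  apply is_derive_div; [apply HG | apply Hg1 | apply Rgt_not_eq]; exact Hu || lra.
Qed.

Lemma scale_derive_lim_0 : is_lim (fun u => 1 - G u * g2 u / g1 u ^ 2) p_infty 0.
Proof.
  assert (Hinv : is_lim (fun u => G u * g2 u / g1 u ^ 2) p_infty 1).
  { apply (is_lim_ext (fun u => / (g1 u ^ 2 / (G u * g2 u)))); [intros; apply Rinv_div|].
    replace (Finite 1) with (Rbar_inv 1) by (simpl; f_equal; field).
    apply (is_lim_inv _ _ _ Hq). intros H. injection H. lra. }
  replace (Finite 0) with (Finite (1 - 1)) by (f_equal; ring).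
  exact (is_lim_minus' _ _ _ _ _ (is_lim_const 1 p_infty) Hinv).
Qed.

Lemma scale_pos (u : R) : t0 < u -> 0 < G u -> 0 < h u.
Proof. intros Hu HGu. apply Rdiv_lt_0_compat; [exact HGu | exact (Hg1pos u Hu)]. Qed.

Variables (t x : nat -> R) (x0 : R).
Hypothesis Htlim : is_lim_seq t p_infty.
Hypothesis Hxlim : is_lim_seq x x0.
Hypothesis Hxnn : forall n, 0 <= x n.

Local Notation s := (shift G g1 t x).

Lemma shift_sub (n : nat) : t n - s n = x n * h (t n).
Proof. unfold shift, scale. rewrite Rmult_div_assoc. ring. Qed.

Lemma x_eventually_bounded : eventually (fun n => x n <= Rabs x0 + 1).
Proof.
  refine (filter_imp _ _ _ (proj2 (is_lim_seq_spec x x0) Hxlim (mkposreal 1 Rlt_0_1))).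
  intros n Hn. simpl in Hn. apply Rabs_def2 in Hn. pose proof (Rle_abs x0). lra.
Qed.

Lemma shift_lim : is_lim_seq (fun n => s n) p_infty.
Proof.
  assert (Hsub : is_lim_seq (fun n => h (t n) / t n) 0).
  { apply (is_lim_comp_seq (fun u => h u / u) t p_infty 0).
    - exact (sublinear_of_deriv_lim_0 h _ t0 scale_derive scale_derive_lim_0).
    - apply filter_forall. discriminate.
    - exact Htlim. }
  assert (Hfac : is_lim_seq (fun n => 1 - x n * (h (t n) / t n)) 1).
  { replace (Finite 1) with (Finite (1 - x0 * 0)) by (f_equal; ring).
    exact (is_lim_seq_minus' _ _ _ _ (is_lim_seq_const 1)
             (is_lim_seq_mult' _ _ _ _ Hxlim Hsub)). }
  apply (is_lim_seq_ext_loc (fun n => t n * (1 - x n * (h (t n) / t n)))).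
  - refine (filter_imp _ _ _ (proj2 (is_lim_seq_spec t p_infty) Htlim (Rmax t0 0))).
    intros n Hn. pose proof (Rmax_l t0 0). pose proof (Rmax_r t0 0).
    assert (Hg1t := Hg1pos (t n) ltac:(lra)).
    unfold shift, scale. field. lra.
  - apply (is_lim_seq_mult _ _ _ _ _ Htlim Hfac).
    apply is_Rbar_mult_p_infty_pos. simpl. lra.
Qed.

Lemma shift_interval_eventually (M : R) :
  eventually (fun n => M <= s n /\ s n <= t n /\
                       forall c, s n <= c <= t n -> t0 < c /\ 0 < G c).
Proof.
  destruct G_pos_eventually as [M1 [HM1 HGM1]].
  pose proof (Rmax_l M M1). pose proof (Rmax_r M M1).
  generalize (filter_and _ _
    (proj2 (is_lim_seq_spec _ p_infty) shift_lim (Rmax M M1))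
    (proj2 (is_lim_seq_spec t p_infty) Htlim M1)).
  apply filter_imp. intros n [Hsn Htn].
  assert (Hh := scale_pos (t n) ltac:(lra) (HGM1 (t n) ltac:(lra))).
  pose proof (shift_sub n). pose proof (Rmult_le_pos _ _ (Hxnn n) (Rlt_le _ _ Hh)).
  repeat split; try lra. apply HGM1. lra.
Qed.

Lemma scale_uniform (eps : R) : 0 < eps ->
  eventually (fun n => forall c, s n <= c <= t n ->
                         Rabs (h c - h (t n)) <= eps * h (t n)).
Proof.
  intros Heps. set (X := Rabs x0 + 1).
  assert (HX : 0 < X) by (pose proof (Rabs_pos x0); unfold X; lra).
  destruct (increment_small_eventually h _ t0 scale_derive scale_derive_lim_0 (eps / X))
    as [M [_ HM]]; [apply Rdiv_lt_0_compat; lra|].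
  generalize (filter_and _ _ (shift_interval_eventually M) x_eventually_bounded).
  apply filter_imp. intros n [[HMs [Hst Hpos]] HxX] c Hc. fold X in HxX.
  destruct (Hpos (t n)) as [Ht0 HGt]; [lra|].
  assert (HhT := scale_pos _ Ht0 HGt).
  assert (Hinc := HM c (t n) ltac:(lra)). rewrite Rabs_minus_sym.
  assert (Hstep : eps / X * (t n - c) <= eps / X * (x n * h (t n))).
  { rewrite <- shift_sub. apply Rmult_le_compat_l; [apply Rlt_le, Rdiv_lt_0_compat|]; lra. }
  assert (HxX' : eps / X * x n <= eps).
  { apply (Rle_trans _ (eps / X * X)); [apply Rmult_le_compat_l;
      [apply Rlt_le, Rdiv_lt_0_compat|]; lra | right; field; lra]. }
  apply (Rle_trans _ _ _ Hinc), (Rle_trans _ _ _ Hstep).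
  rewrite <- Rmult_assoc. apply Rmult_le_compat_r; lra.
Qed.

Lemma scale_ratio_lim : is_lim_seq (fun n => h (s n) / h (t n)) 1.
Proof.
  apply (is_lim_seq_approx _ _ 1 (is_lim_seq_const 1)). intros eps Heps.
  generalize (filter_and _ _ (scale_uniform eps Heps) (shift_interval_eventually t0)).
  apply filter_imp. intros n [Hunif [_ [Hst Hpos]]].
  destruct (Hpos (t n)) as [Ht0 HGt]; [lra|].
  assert (HhT := scale_pos _ Ht0 HGt).
  replace (h (s n) / h (t n) - 1) with ((h (s n) - h (t n)) / h (t n)) by (field; lra).
  rewrite Rabs_div, (Rabs_pos_eq (h (t n))) by lra.
  apply Rle_div_l; [lra|]. apply Hunif. lra.
Qed.

Lemma log_increment_lim : is_lim_seq (fun n => ln (G (t n)) - ln (G (s n))) x0.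
Proof.
  apply (is_lim_seq_approx _ _ _ Hxlim). intros eps Heps.
  set (X := Rabs x0 + 1).
  assert (HX : 0 < X) by (pose proof (Rabs_pos x0); unfold X; lra).
  set (e := Rmin (1 / 2) (eps / (2 * X))).
  assert (He : 0 < e) by (apply Rmin_pos; [lra | apply Rdiv_lt_0_compat; lra]).
  assert (He2 : e <= 1 / 2) by apply Rmin_l.
  assert (HeX : 2 * e * X <= eps).
  { assert (e <= eps / (2 * X)) by apply Rmin_r.
    apply Rle_div_r in H; lra. }
  generalize (filter_and _ _ (filter_and _ _ (scale_uniform e He)
    (shift_interval_eventually t0)) x_eventually_bounded).
  apply filter_imp. intros n [[Hunif [_ [Hst Hpos]]] HxX]. fold X in HxX.
  destruct (Hpos (t n)) as [Ht0 HGt]; [lra|].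
  assert (HhT := scale_pos _ Ht0 HGt).
  assert (Hbounds : / ((1 + e) * h (t n)) * (t n - s n)
                    <= ln (G (t n)) - ln (G (s n))
                    <= / ((1 - e) * h (t n)) * (t n - s n)).
  { apply (increment_bounds (fun y => ln (G y)) (fun c => g1 c / G c)); [lra | |].
    - intros c Hc. destruct (Hpos c Hc).
      apply is_derive_ln_comp; [apply HG|]; lra.
    - intros c Hc. destruct (Hpos c Hc) as [Hc0 HGc].
      assert (Hhc := scale_pos c Hc0 HGc).
      assert (Hhc_near := proj1 (Rabs_le_between' _ _ _) (Hunif c Hc)).
      replace (g1 c / G c) with (/ h c) by apply Rinv_div.
      split; apply Rinv_le_contravar; nra. }
  rewrite shift_sub in Hbounds.
  replace (/ ((1 + e) * h (t n)) * (x n * h (t n))) with (x n / (1 + e))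
    in Hbounds by (field; lra).
  replace (/ ((1 - e) * h (t n)) * (x n * h (t n))) with (x n / (1 - e))
    in Hbounds by (field; lra).
  apply (Rle_trans _ _ _ (Rabs_sub_le_of_div_bounds _ _ _ (Hxnn n) He He2 Hbounds)).
  assert (e * x n <= e * X) by (apply Rmult_le_compat_l; lra).
  lra.
Qed.

Theorem shift_ratio_lims :
  is_lim_seq (fun n => G (s n) / G (t n)) (exp (- x0)) /\
  is_lim_seq (fun n => g1 (s n) / g1 (t n)) (exp (- x0)).
Proof.
  assert (HGratio : is_lim_seq (fun n => G (s n) / G (t n)) (exp (- x0))).
  { apply (is_lim_seq_ext_loc (fun n => exp (- (ln (G (t n)) - ln (G (s n)))))).
    - refine (filter_imp _ _ _ (shift_interval_eventually t0)).
      intros n [_ [Hst Hpos]].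
      destruct (Hpos (s n)), (Hpos (t n)); try lra.
      rewrite Ropp_minus_distr, <- ln_div, exp_ln by (try apply Rdiv_lt_0_compat; lra).
      reflexivity.
    - apply (is_lim_seq_continuous exp);
        [apply derivable_continuous_pt, derivable_pt_exp|].
      apply (is_lim_seq_opp _ x0), log_increment_lim. }
  split; [exact HGratio|].
  replace (exp (- x0)) with (exp (- x0) / 1) by field.
  apply (is_lim_seq_ext_loc (fun n => (G (s n) / G (t n)) / (h (s n) / h (t n)))).
  - refine (filter_imp _ _ _ (shift_interval_eventually t0)).
    intros n [_ [Hst Hpos]].
    destruct (Hpos (s n)) as [Hs0 HGs]; [lra|]. destruct (Hpos (t n)) as [Ht0 HGt]; [lra|].
    pose proof (Hg1pos _ Hs0). pose proof (Hg1pos _ Ht0).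
    unfold scale. field. repeat split; lra.
  - exact (is_lim_seq_div' _ _ _ _ HGratio scale_ratio_lim R1_neq_R0).
Qed.

End Shift.

Theorem lemma2p9
  (f f1 f2 g1 g2 : R -> R) (t0 : R)
  (* f : [0,oo) -> [0,oo), C^1 on [0,oo) with derivative f1 *)
  (Ht0 : 0 <= t0)
  (Hfnn : forall t, 0 <= t -> 0 <= f t)
  (Hf1 : deriv_Ici 0 f f1) (Hf1c : cont_Ici 0 f1)
  (* f > 0 on [t0,oo), f in C^2([t0,oo)) *)
  (Hfpos : forall t, t0 <= t -> 0 < f t)
  (Hf2 : deriv_Ici t0 f1 f2) (Hf2c : cont_Ici t0 f2)
  (* g = log f on [t0,oo); g1 = g', g2 = g'' on [t0,oo) *)
  (Hg1 : deriv_Ici t0 (fun t => ln (f t)) g1)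
  (Hg2 : deriv_Ici t0 g1 g2)
  (* (H1)(i) with q = 1 *)
  (Hg1pos : forall t, t0 <= t -> 0 < g1 t)
  (Hg2pos : forall t, t0 <= t -> 0 < g2 t)
  (Hq : is_lim (fun t => g1 t ^ 2 / (ln (f t) * g2 t)) p_infty 1)
  (Hp : exists p : Rbar, Rbar_lt 0 p /\
          is_lim (fun t => t * g1 t / ln (f t)) p_infty p)
  (* (H1)(ii) *)
  (Hmono : forall s t, t0 <= s -> s <= t ->
             s * g1 s / ln (f s) <= t * g1 t / ln (f t))
  (Hhat : exists (k : nat) (gh gh1 gh2 : R -> R),
            (1 <= k)%nat /\
            deriv_Ici t0 gh gh1 /\ deriv_Ici t0 gh1 gh2 /\ cont_Ici t0 gh2 /\
            (forall t, t0 <= t -> f t = exp_iter k (gh t)) /\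
            (forall s t, t0 <= s -> s <= t -> gh1 t / gh t <= gh1 s / gh s))
  (* sequences *)
  (t x : nat -> R) (x0 : R)
  (Htpos : forall n, 0 < t n) (Hxpos : forall n, 0 < x n) (Hx0 : 0 <= x0)
  (Htlim : is_lim_seq t p_infty) (Hxlim : is_lim_seq x x0) :
  is_lim_seq (fun n => ln (f (t n - x n * ln (f (t n)) / g1 (t n))) / ln (f (t n)))
    (exp (- x0)) /\
  is_lim_seq (fun n => g1 (t n - x n * ln (f (t n)) / g1 (t n)) / g1 (t n))
    (exp (- x0)).
Proof.
  apply (shift_ratio_lims (fun u => ln (f u)) g1 g2 t0).
  - intros u Hu. exact (deriv_Ici_is_derive t0 _ _ u Hg1 Hu).
  - intros u Hu. exact (deriv_Ici_is_derive t0 _ _ u Hg2 Hu).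
  - intros u Hu. apply Hg1pos. lra.
  - intros u Hu. apply Hg2pos. lra.
  - exact Hq.
  - exact Htlim.
  - exact Hxlim.
  - intros n. apply Rlt_le, Hxpos.
Qed.
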